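(* Let $W$ be the affine Weyl group of an irreducible reduced crystallographic root system of rank 2, with simple generators $s_0,s_1,s_2$. Let $H_{r_0},H_{r_1}$ be adjacent parallel hyperplanes ($H_{\alpha,c}$ and $H_{\alpha,c+1}$ for some root $\alpha$, $c\in\mathbb{Z}$) and suppose both the alcove $w\in W$ and the identity alcove lie in the strip between them. If $D_R(w)=\{0,i\}$ with $i\in\{1,2\}$, then $s_0s_i$ does not have order $4$.
   Context: $W$ is generated by the reflections in the lines $H_{\beta,k}=\{v:\langle v,\beta\rangle=k\}$ ($\beta$ a root, $k\in\mathbb{Z}$) in a Euclidean plane; its simple generators $s_0,s_1,s_2$ are the reflections in the walls of the fundamental alcove $A_0$, $s_0$ being the reflection in the wall not through the origin. Elements are identified with alcoves via $w\mapsto wA_0$. $\ell$ is Coxeter length; $D_R(w)=\{j:\ell(ws_j)<\ell(w)\}$. *)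

From mathcomp Require Import all_boot all_order all_algebra.
Set Implicit Arguments. Unset Strict Implicit. Unset Printing Implicit Defensive.
Import Order.TTheory GRing.Theory Num.Theory.
Local Open Scope ring_scope.

Inductive rtype := A2 | B2 | G2.

Section AffineWeyl.
Context {R : realFieldType}.

(* The Euclidean plane is 'rV[R]_2, written in coordinates w.r.t. the basis of
   simple root_sys alpha1, alpha2; the inner product is given by a Gram matrix. *)
Definition mkv (a b : R) : 'rV[R]_2 :=
  \row_(j < 2) if val j == 0%N then a else b.

Definition m2 (x y z u : R) : 'M[R]_2 :=
  \matrix_(a < 2, b < 2)
    if val a == 0%N then (if val b == 0%N then x else y)
    else (if val b == 0%N then z else u).

Definition gram (t : rtype) : 'M[R]_2 :=
  match t with
  | A2 => m2 2 (-1) (-1) 2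
  | B2 => m2 1 (-1) (-1) 2      (* alpha1 short, alpha2 long *)
  | G2 => m2 2 (-3) (-3) 6      (* alpha1 short, alpha2 long *)
  end.

Definition ip (t : rtype) (u v : 'rV[R]_2) : R := (u *m gram t *m v^T) 0 0.

Definition alpha1 : 'rV[R]_2 := mkv 1 0.
Definition alpha2 : 'rV[R]_2 := mkv 0 1.

Definition pos_roots (t : rtype) : seq 'rV[R]_2 :=
  match t with
  | A2 => [:: mkv 1 0; mkv 0 1; mkv 1 1]
  | B2 => [:: mkv 1 0; mkv 0 1; mkv 1 1; mkv 2 1]
  | G2 => [:: mkv 1 0; mkv 0 1; mkv 1 1; mkv 2 1; mkv 3 1; mkv 3 2]
  end.

Definition root_sys (t : rtype) : seq 'rV[R]_2 :=
  pos_roots t ++ map (fun b => - b) (pos_roots t).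

Definition highest (t : rtype) : 'rV[R]_2 :=
  match t with A2 => mkv 1 1 | B2 => mkv 2 1 | G2 => mkv 3 2 end.

Definition in_A0 (t : rtype) (v : 'rV[R]_2) : Prop :=
  forall beta, beta \in pos_roots t -> 0 < ip t v beta < 1.

(* affine maps v |-> v *m f.1 + f.2 (an eqType, so equality is decidable) *)
Definition aff := ('M[R]_2 * 'rV[R]_2)%type.
Definition aff_app (f : aff) (v : 'rV[R]_2) : 'rV[R]_2 := v *m f.1 + f.2.
(* comp f g = f o g *)
Definition comp (f g : aff) : aff := (g.1 *m f.1, g.2 *m f.1 + f.2).
Definition aff_id : aff := (1%:M, 0).

(* reflection in H_{beta,k} = {v | <v,beta> = k}:
   v |-> v - (<v,beta> - k) beta^vee, beta^vee = 2 beta / <beta,beta> *)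
Definition refl (t : rtype) (beta : 'rV[R]_2) (k : R) : aff :=
  let bv := (2 / ip t beta beta) *: beta in
  (1%:M - (gram t *m beta^T) *m bv, k *: bv).

(* simple generators: s0 = reflection in the wall H_{theta,1} of A0 not
   through the origin, s1, s2 = reflections in H_{alpha1,0}, H_{alpha2,0} *)
Definition gen (t : rtype) (j : 'I_3) : aff :=
  if val j == 0%N then refl t (highest t) 1
  else if val j == 1%N then refl t alpha1 0
  else refl t alpha2 0.

Definition evalw (t : rtype) (s : seq 'I_3) : aff :=
  foldr (fun j acc => comp (gen t j) acc) aff_id s.

Lemma evalw_exists (t : rtype) (s : seq 'I_3) :
  exists n, [exists u : n.-tuple 'I_3, evalw t u == evalw t s].
Proof. by exists (size s); apply/existsP; exists (in_tuple s). Qed.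

Definition coxlen (t : rtype) (s : seq 'I_3) : nat := ex_minn (evalw_exists t s).

Definition DR (t : rtype) (s : seq 'I_3) : {set 'I_3} :=
  [set j | (coxlen t (rcons s j) < coxlen t s)%N].

Definition aff_pow (g : aff) (n : nat) : aff := iter n (comp g) aff_id.

Definition has_order (g : aff) (n : nat) : Prop :=
  (0 < n)%N /\ aff_pow g n = aff_id /\
  forall m, (0 < m)%N -> (m < n)%N -> aff_pow g m <> aff_id.

End AffineWeyl.

From Pilot Require Import Defs.
From mathcomp Require Import all_boot all_order all_algebra zify ring lra.
Set Implicit Arguments. Unset Strict Implicit. Unset Printing Implicit Defensive.
Import Order.TTheory GRing.Theory Num.Theory.
Local Open Scope ring_scope.

(* Elements of W are affine maps v |-> v M + b with integer coefficients (for
   G2, after scaling translations by 3), which makes W computable.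
   For A2, G2, and for B2 with i = 2, the element s0 s_i has order 2 or 3, by
   computation.  The remaining case, B2 with i = 1, is ruled out geometrically.
   Fix a generic point p0 of A0; then l(f) = sum_{beta > 0} |floor <f p0, beta>|
   counts the hyperplanes separating f A0 from A0: a generator changes this sum by
   at most one, and a positive sum can always be decreased.  If s0 and s1 are both
   right descents of w, then A0 and w A0 are separated by a hyperplane of every
   direction, so no strip between adjacent parallel hyperplanes contains both. *)

(** * An integer model of W *)

Definition mxZ := (int * int * int * int)%type.
Definition vecZ := (int * int)%type.
Definition affZ := (mxZ * vecZ)%type.

Definition vmulZ (v : vecZ) (M : mxZ) : vecZ :=
  let: (a, b) := v in let: (x, y, z, u) := M in (a * x + b * z, a * y + b * u).
Definition mmulZ (A B : mxZ) : mxZ :=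
  let: (a, b, c, d) := A in let: (x, y, z, u) := B in
  (a * x + b * z, a * y + b * u, c * x + d * z, c * y + d * u).
Definition vaddZ (v w : vecZ) : vecZ := (v.1 + w.1, v.2 + w.2).
Definition compZ (f g : affZ) : affZ := (mmulZ g.1 f.1, vaddZ (vmulZ g.2 f.1) f.2).
Definition idZ : affZ := ((1, 0, 0, 1), (0, 0)).

Lemma compZA : associative compZ.
Proof.
move=> [[[[a b] c] d] [x y]] [[[[a' b'] c'] d'] [x' y']] [[[[a'' b''] c''] d''] [x'' y'']].
rewrite /compZ /mmulZ /vmulZ /vaddZ /=; congr (_, _, _, _, (_, _)); ring.
Qed.

Lemma comp1Z : left_id idZ compZ.
Proof.
move=> [[[[a b] c] d] [x y]].
rewrite /compZ /mmulZ /vmulZ /vaddZ /=; congr (_, _, _, _, (_, _)); ring.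
Qed.

Lemma compZ1 : right_id idZ compZ.
Proof.
move=> [[[[a b] c] d] [x y]].
rewrite /compZ /mmulZ /vmulZ /vaddZ /=; congr (_, _, _, _, (_, _)); ring.
Qed.

(* [gen t j], with the translation part multiplied by 3 when [t = G2]. *)
Definition genZ (t : rtype) (j : nat) : affZ :=
  match t, j with
  | A2, 0 => ((0, -1, -1, 0), (1, 1))
  | A2, 1 => ((-1, 0, 1, 1), (0, 0))
  | B2, 0 => ((-1, -1, 0, 1), (2, 1))
  | B2, 1 => ((-1, 0, 2, 1), (0, 0))
  | G2, 0 => ((1, 0, -3, -1), (3, 2))
  | G2, 1 => ((-1, 0, 3, 1), (0, 0))
  | _, _ => ((1, 1, 0, -1), (0, 0))
  end.

Definition evalwZ (t : rtype) (s : seq 'I_3) : affZ :=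
  foldr (fun j : 'I_3 => compZ (genZ t j)) idZ s.

Definition powZ (g : affZ) (n : nat) : affZ := iter n (compZ g) idZ.

Lemma evalwZ_rcons t s j : evalwZ t (rcons s j) = compZ (evalwZ t s) (genZ t j).
Proof.
elim: s => [|a s IH] /=; first by rewrite comp1Z compZ1.
by rewrite IH compZA.
Qed.

Lemma genZ_invol t j : compZ (genZ t j) (genZ t j) = idZ.
Proof. by case: t; case: j => [|[|j]]. Qed.

Definition coxm (t : rtype) (i : nat) : nat :=
  match t, i with
  | A2, _ => 3
  | B2, 1 => 4
  | B2, _ => 2
  | G2, 1 => 2
  | G2, _ => 3
  end.

Lemma powZ_coxm t (i : 'I_3) : i != ord0 -> powZ (evalwZ t [:: ord0; i]) (coxm t i) = idZ.
Proof. by case: t; case: i => [[|[|[|i]]] Hi] //= _; vm_compute. Qed.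

Lemma coxm_B2_or_lt4 t (i : 'I_3) : i != ord0 ->
  (t = B2 /\ val i = 1%N) \/ (0 < coxm t i < 4)%N.
Proof. by case: t; case: i => [[|[|[|?]]] ?]; auto. Qed.

(** * The length function of type B2 *)

Definition lin_B2 : seq mxZ :=
  [:: (1, 0, 0, 1); (-1, -1, 0, 1); (-1, 0, 2, 1); (1, 1, 0, -1);
      (1, 1, -2, -1); (-1, 0, 0, -1); (-1, -1, 2, 1); (1, 0, -2, -1)].

(* Linear part in the finite Weyl group, translation part in the coroot lattice
   Z (2 alpha1) + Z alpha2. *)
Definition in_WB2 (f : affZ) : bool := (f.1 \in lin_B2) && (2 %| f.2.1)%Z.

Definition ipB2 (u v : vecZ) : int := u.1 * v.1 - u.1 * v.2 - u.2 * v.1 + 2 * u.2 * v.2.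

Definition pos_rootsB2 : seq vecZ := [:: (1, 0); (0, 1); (1, 1); (2, 1)].

(* Ten times the point p0 = (4/5, 1/2) of A0. *)
Definition q0 : vecZ := (8, 5).

(* ten times <f p0, b> *)
Definition ip10 (f : affZ) (b : vecZ) : int := ipB2 (vmulZ q0 f.1) b + 10 * ipB2 f.2 b.

(* floor <f p0, b> when f is in W and b > 0 *)
Definition floorB2 (f : affZ) (b : vecZ) : int :=
  if ipB2 (vmulZ q0 f.1) b < 0 then ipB2 f.2 b - 1 else ipB2 f.2 b.

Definition lenB2 (f : affZ) : nat := sumn [seq `|floorB2 f b|%N | b <- pos_rootsB2].

Ltac case_mem H :=
  move: H; rewrite !inE; repeat (case/orP; [move/eqP->|]); [..|move/eqP->].

Ltac evalB2 :=
  cbv beta iota zeta delta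
    [lenB2 sumn foldr map pos_rootsB2 floorB2 compZ mmulZ vmulZ vaddZ ipB2 q0 genZ fst snd];
  repeat match goal with |- context[(?x < 0 :> int)%R] =>
    let v := eval vm_compute in (x < 0 :> int)%R in change (x < 0 :> int)%R with v end;
  cbv iota.

Lemma in_WB2_gen f j : in_WB2 f -> in_WB2 (compZ f (genZ B2 j)).
Proof.
case: f => M [b0 b1] /andP[/= HM /dvdzP[k ->]]; rewrite /in_WB2.
case_mem HM; case: j => [|[|j]]; evalB2; apply/andP; split => //;
  apply/dvdzP; first [exists (k + 1); ring | exists k; ring | exists (k - 1); ring].
Qed.

Lemma lenB2_gen_le f j : in_WB2 f -> (lenB2 (compZ f (genZ B2 j)) <= (lenB2 f).+1)%N.
Proof.
case: f => M [b0 b1] /andP[/= HM /dvdzP[k ->]].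
by case_mem HM; case: j => [|[|j]]; evalB2; lia.
Qed.

Lemma lenB2_descent f : in_WB2 f -> (0 < lenB2 f)%N ->
  exists j : 'I_3, (lenB2 (compZ f (genZ B2 j)) < lenB2 f)%N.
Proof.
case: f => M [b0 b1] /andP[/= HM /dvdzP[k ->]]; set f := (M, _) => len_gt0.
suff : (lenB2 (compZ f (genZ B2 0)) < lenB2 f)%N \/
       (lenB2 (compZ f (genZ B2 1)) < lenB2 f)%N \/
       (lenB2 (compZ f (genZ B2 2)) < lenB2 f)%N.
  by case=> [|[|]] ?; [exists ord0 | exists (@Ordinal 3 1 isT) | exists (@Ordinal 3 2 isT)].
by move: len_gt0; rewrite {}/f; case_mem HM; evalB2; lia.
Qed.

Lemma lenB2_eq0 f : in_WB2 f -> lenB2 f = 0%N -> f = idZ.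
Proof.
case: f => M [b0 b1] /andP[/= HM /dvdzP[k ->]].
by case_mem HM; evalB2 => len0; rewrite /idZ; congr (_, _, _, _, (_, _)); lia.
Qed.

Lemma in_WB2_evalw s : in_WB2 (evalwZ B2 s).
Proof.
elim/last_ind: s => [|s j IH]; first by [].
by rewrite evalwZ_rcons; apply: in_WB2_gen.
Qed.

Lemma lenB2_evalw_le s : (lenB2 (evalwZ B2 s) <= size s)%N.
Proof.
elim/last_ind: s => [|s j IH]; first by [].
rewrite evalwZ_rcons size_rcons.
exact: leq_trans (lenB2_gen_le _ (in_WB2_evalw s)) _.
Qed.

Lemma in_WB2_word f : in_WB2 f -> exists2 u, evalwZ B2 u = f & (size u <= lenB2 f)%N.
Proof.
move: {2}(lenB2 f) (leqnn (lenB2 f)) => n; elim: n f => [|n IH] f len_le Wf.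
  by exists [::]; rewrite // (lenB2_eq0 Wf) //; apply/eqP; rewrite -leqn0.
have [len0 | len_gt0] := posnP (lenB2 f).
  by exists [::]; rewrite ?len0 // (lenB2_eq0 Wf len0).
have [j desc] := lenB2_descent Wf len_gt0.
have len_n : (lenB2 (compZ f (genZ B2 j)) <= n)%N by rewrite -ltnS (leq_trans desc).
have [u fu size_u] := IH _ len_n (in_WB2_gen j Wf).
exists (rcons u j); first by rewrite evalwZ_rcons fu -compZA genZ_invol compZ1.
by rewrite size_rcons (leq_ltn_trans size_u desc).
Qed.

Lemma floorB2_spec f b : f.1 \in lin_B2 -> b \in pos_rootsB2 ->
  10 * floorB2 f b < ip10 f b < 10 * floorB2 f b + 10.
Proof.
case: f => M [b0 b1] /= HM Hb; rewrite /ip10 /=.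
by case_mem HM; case_mem Hb; evalB2; apply/andP; split; lia.
Qed.

Lemma floorB2_id a : a \in pos_rootsB2 -> floorB2 idZ a = 0.
Proof. by rewrite !inE => /or4P[] /eqP->. Qed.

(* w H_{theta,1} and w H_{alpha1,0} meet at a special vertex of w A0; the local
   chamber at that vertex containing w A0 is opposite to the one containing A0,
   so each of the four hyperplanes through it separates the two alcoves. *)
Lemma descents01_B2_separate f b : in_WB2 f ->
  (lenB2 (compZ f (genZ B2 0)) < lenB2 f)%N -> (lenB2 (compZ f (genZ B2 1)) < lenB2 f)%N ->
  b \in pos_rootsB2 -> floorB2 f b <> 0.
Proof.
case: f => M [b0 b1] /andP[/= HM /dvdzP[k ->]] d0 d1 Hb.
move: d0 d1; case_mem HM; case_mem Hb; evalB2; lia.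
Qed.

(** * Embedding into the real model *)

Section Embedding.
Variable R : realFieldType.

Ltac case_ij := case=> [[|[|?]] ?]; case=> [[|[|?]] ?].

Lemma mkv_m2 (a b x y z u : R) : mkv a b *m m2 x y z u = mkv (a * x + b * z) (a * y + b * u).
Proof.
by apply/matrixP; case_ij; rewrite !mxE !big_ord_recl big_ord0 !mxE //= addr0.
Qed.

Lemma m2_m2 (a b c d x y z u : R) : m2 a b c d *m m2 x y z u =
  m2 (a * x + b * z) (a * y + b * u) (c * x + d * z) (c * y + d * u).
Proof.
by apply/matrixP; case_ij; rewrite !mxE !big_ord_recl big_ord0 !mxE //= addr0.
Qed.

Lemma mkvD (a b c d : R) : mkv a b + mkv c d = mkv (a + c) (b + d).
Proof. by apply/matrixP; case_ij; rewrite !mxE. Qed.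

Lemma scale_mkv (d a b : R) : d *: mkv a b = mkv (d * a) (d * b).
Proof. by apply/matrixP; case_ij; rewrite !mxE. Qed.

Lemma ip_mkv_m2 (a b c d x y z u : R) :
  (mkv a b *m m2 x y z u *m (mkv c d)^T) 0 0 = (a * x + b * z) * c + (a * y + b * u) * d.
Proof. by rewrite mkv_m2 !mxE !big_ord_recl big_ord0 !mxE /= addr0. Qed.

Lemma refl_matrix_m2 (a b x y z u d : R) :
  1%:M - (m2 x y z u *m (mkv a b)^T) *m (d *: mkv a b) =
  m2 (1 - (x * a + y * b) * (d * a)) (- ((x * a + y * b) * (d * b)))
     (- ((z * a + u * b) * (d * a))) (1 - (z * a + u * b) * (d * b)).
Proof.
rewrite scale_mkv; apply/matrixP; case_ij;
by rewrite !mxE !big_ord_recl big_ord0 !mxE //= ?big_ord_recl ?big_ord0 ?mxE /= ?addr0 ?sub0r.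
Qed.

Definition dd (t : rtype) : R := if t is G2 then 3 else 1.

Lemma dd_neq0 t : dd t != 0.
Proof. by case: t; rewrite /dd ?oner_neq0 ?pnatr_eq0. Qed.

Definition embZ (t : rtype) (f : affZ) : @aff R :=
  (m2 f.1.1.1.1%:~R f.1.1.1.2%:~R f.1.1.2%:~R f.1.2%:~R,
   mkv (f.2.1%:~R / dd t) (f.2.2%:~R / dd t)).

Lemma embZ_comp t f g : embZ t (compZ f g) = Defs.comp (embZ t f) (embZ t g).
Proof.
case: f g => [[[[a b] c] d] [x y]] [[[[a' b'] c'] d'] [x' y']].
rewrite /embZ /Defs.comp /= m2_m2 mkv_m2 mkvD; congr (m2 _ _ _ _, mkv _ _);
  rewrite ?intrD ?intrM; ring.
Qed.

Lemma embZ_id t : embZ t idZ = aff_id.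
Proof. by rewrite /embZ /aff_id /= mul0r; congr (_, _); apply/matrixP; case_ij; rewrite !mxE. Qed.

Lemma gen_embZ t (j : 'I_3) : gen t j = embZ t (genZ t j).
Proof.
rewrite /gen /refl /highest /ip /alpha1 /alpha2 /embZ.
case: t; case: j => [[|[|[|j]]] Hj] //=; rewrite ip_mkv_m2 refl_matrix_m2 !scale_mkv /=;
  by congr (m2 _ _ _ _, mkv _ _); field.
Qed.

Lemma evalw_embZ t s : evalw t s = embZ t (evalwZ t s).
Proof. by elim: s => [|j s IH] /=; rewrite ?embZ_id // embZ_comp -IH -gen_embZ. Qed.

Lemma aff_pow_embZ t f n : aff_pow (embZ t f) n = embZ t (powZ f n).
Proof. by elim: n => [|n IH] /=; rewrite ?embZ_id // embZ_comp -IH. Qed.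

Lemma embZ_inj t : injective (embZ t).
Proof.
move=> [[[[a b] c] d] [x y]] [[[[a' b'] c'] d'] [x' y']] [E1 E2].
have E := fun i j => congr1 (fun A : 'M[R]_2 => A i j) E1.
have F := fun j => congr1 (fun v : 'rV[R]_2 => v 0 j) E2.
move: (E 0 0) (E 0 1) (E 1 0) (E 1 1) (F 0) (F 1); rewrite !mxE /=.
move=> /intr_inj-> /intr_inj-> /intr_inj-> /intr_inj->.
have /mulIf dd_inj := invr_neq0 (dd_neq0 t).
by move=> /dd_inj/intr_inj-> /dd_inj/intr_inj->.
Qed.

Lemma coxlen_le t s u : @evalw R t u = evalw t s -> (@coxlen R t s <= size u)%N.
Proof.
move=> us; rewrite /coxlen; case: ex_minnP => m _ -> //.
by apply/existsP; exists (in_tuple u); rewrite /= us.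
Qed.

Lemma coxlen_word t s : exists2 u, @evalw R t u = evalw t s & size u = @coxlen R t s.
Proof.
rewrite /coxlen; case: ex_minnP => m /existsP[u /eqP us] _.
by exists u; rewrite ?size_tuple.
Qed.

Lemma coxlen_B2 s : @coxlen R B2 s = lenB2 (evalwZ B2 s).
Proof.
apply/eqP; rewrite eqn_leq; apply/andP; split.
  have [u us size_u] := in_WB2_word (in_WB2_evalw s).
  by apply: leq_trans size_u; apply: coxlen_le; rewrite !evalw_embZ us.
have [u /[!evalw_embZ] /embZ_inj us <-] := coxlen_word B2 s.
by rewrite -us lenB2_evalw_le.
Qed.

Lemma root_sys_pos t alpha : alpha \in @root_sys R t ->
  exists2 b, b \in pos_roots t & alpha = b \/ alpha = - b.
Proof.
rewrite mem_cat => /orP[alpha_pos | /mapP[b b_pos ->]]; first by exists alpha; [|left].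
by exists b; [|right].
Qed.

Definition mkvZ (a : vecZ) : 'rV[R]_2 := mkv a.1%:~R a.2%:~R.

Lemma pos_roots_B2E : pos_roots B2 = map mkvZ pos_rootsB2.
Proof. by []. Qed.

Lemma ipN t (v b : 'rV[R]_2) : ip t v (- b) = - ip t v b.
Proof. by rewrite /ip linearN /= mulmxN mxE. Qed.

Definition p0 : 'rV[R]_2 := mkv (4 / 5) (1 / 2).

Lemma p0_in_A0 : in_A0 B2 p0.
Proof.
move=> b; rewrite !inE => /or4P[] /eqP->;
  by rewrite /ip /gram /p0 ip_mkv_m2; apply/andP; split; lra.
Qed.

Lemma ip_image_p0 f a : ip B2 (aff_app (embZ B2 f) p0) (mkvZ a) = (ip10 f a)%:~R / 10.
Proof.
case: f a => [[[[m1 m2] m3] m4] [x y]] [a1 a2].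
rewrite /aff_app /embZ /ip /gram /p0 /mkvZ /ip10 /ipB2 /vmulZ /q0 /=.
by rewrite mkv_m2 mkvD ip_mkv_m2 !divr1 !(intrD, intrM, intrB); field.
Qed.

Lemma strip_intr_div (c n : int) (d : nat) : (0 < d)%N ->
  c%:~R < n%:~R / (d%:R : R) < c%:~R + 1 -> c * d%:Z < n < (c + 1) * d%:Z.
Proof.
move=> d_gt0 /andP[]; rewrite ltr_pdivlMr ?ltr_pdivrMr ?ltr0n //.
have intr_d (z : int) : z%:~R * d%:R = (z * d%:Z)%:~R :> R by rewrite intrM.
have -> : c%:~R + 1 = (c + 1)%:~R :> R by rewrite intrD.
by rewrite !intr_d !ltr_int => -> ->.
Qed.

Lemma ip_p0 a : ip B2 p0 (mkvZ a) = (ip10 idZ a)%:~R / 10.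
Proof. by rewrite -ip_image_p0 embZ_id /aff_app mulmx1 addr0. Qed.

Lemma B2_descents01_not_in_strip w (i : 'I_3) (alpha : 'rV[R]_2) (c : int) : val i = 1%N ->
  alpha \in root_sys B2 ->
  (forall v, in_A0 B2 v -> c%:~R < ip B2 v alpha < c%:~R + 1) ->
  (forall v, in_A0 B2 v -> c%:~R < ip B2 (aff_app (evalw B2 w) v) alpha < c%:~R + 1) ->
  (@coxlen R B2 (rcons w ord0) < @coxlen R B2 w)%N ->
  (@coxlen R B2 (rcons w i) < @coxlen R B2 w)%N ->
  False.
Proof.
move=> i1 /root_sys_pos[_ /[1!pos_roots_B2E] /mapP[a a_pos ->] alpha_pm] stripA0 stripW.
rewrite !coxlen_B2 !evalwZ_rcons i1 => d0 d1.
have Wf := in_WB2_evalw w; have /andP[lin_f _] := Wf.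
apply: (descents01_B2_separate Wf d0 d1 a_pos).
have := floorB2_spec lin_f a_pos; have := floorB2_spec (f := idZ) isT a_pos.
move: (stripA0 _ p0_in_A0) (stripW _ p0_in_A0); rewrite evalw_embZ floorB2_id //.
case: alpha_pm => ->; rewrite ?ipN ip_p0 ip_image_p0 -?mulNr -?intrN;
  move=> /strip_intr_div-/(_ isT) S1 /strip_intr_div-/(_ isT) S2; lia.
Qed.
End Embedding.

Theorem lemma4p42 (R : realFieldType) (t : rtype) (w : seq 'I_3) (i : 'I_3)
    (alpha : 'rV[R]_2) (c : int) :
  i != ord0 ->
  alpha \in root_sys t ->
  (forall v, in_A0 t v -> c%:~R < ip t v alpha < c%:~R + 1) ->
  (forall v, in_A0 t v ->
     c%:~R < ip t (aff_app (evalw t w) v) alpha < c%:~R + 1) ->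
  @DR R t w = [set ord0; i] ->
  ~ has_order (@evalw R t [:: ord0; i]) 4.
Proof.
move=> i_neq0 alpha_root stripA0 stripW DRw [_ [_ pow_neq1]].
have /[!inE] d0 : ord0 \in @DR R t w by rewrite DRw !inE eqxx.
have /[!inE] di : i \in @DR R t w by rewrite DRw !inE eqxx orbT.
have [[t_B2 i1] | /andP[m_gt0 m_lt4]] := coxm_B2_or_lt4 t i_neq0.
  by subst t; exact: B2_descents01_not_in_strip i1 alpha_root stripA0 stripW d0 di.
apply: (pow_neq1 _ m_gt0 m_lt4).
by rewrite evalw_embZ aff_pow_embZ powZ_coxm // embZ_id.
Qed.
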